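(* Assume $d_0\delta>2$, and let $\varepsilon_0=\frac{d_0}2-\frac1\delta>0$ and $t=\frac{d_0}{2}$. Let $G=(L\cup R,E)$ be a $(c,d,\alpha,\delta)$-bipartite expander with $L=[n]$, $C_0\subseteq\mathbb{F}_2^d$ a linear code of minimum distance $d_0$, $x\in\mathbb{F}_2^n$ and $y\in T(G,C_0)$ with $d_H(x,y)\le\alpha n$, and $F=F(x,y)$. For $q\in W$, let $P_q$ be the set of $i\in[n]$ such that $p_i=q$ at the end of $\mathsf{DeterFlip}(x,q)$. Then there exists $q\in W\setminus\{0\}$ such that $|P_q\cap F|-|P_q\setminus F|\ge\frac{\varepsilon_0\delta}{2ct^2}|F|$.
   Context: A bipartite graph is $(c,d)$-regular if left degrees are $c$ and right degrees $d$; $N(S)$ is the neighborhood of $S$. A $(c,d,\alpha,\delta)$-bipartite expander ($\alpha,\delta\in(0,1]$) is a $(c,d)$-regular bipartite graph with $|N(S)|\ge\delta c|S|$ for all $S\subseteq L$, $|S|\le\alpha|L|$. Tanner code: $L=[n]$, for each $v\in R$ a fixed ordering of $N(v)$ defines $x_{N(v)}\in\mathbb{F}_2^d$, and $T(G,C_0)=\{x:x_{N(v)}\in C_0\ \forall v\in R\}$. $F(x,y)=\{i\in[n]:x_i\ne y_i\}$; $d_H$ is Hamming distance. $\mathsf{Decode}(z)$ is the codeword of $C_0$ closest to $z\in\mathbb{F}_2^d$, ties broken lexicographically. $W=\{\frac{i}{cd_0}:i\in\mathbb{Z},0\le i\le cd_0\}$. $\mathsf{DeterFlip}(x,q)$ for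 $q\in\mathbb{R}$: set $p_1=\dots=p_n=0$; for each $v\in R$, let $w_v=\mathsf{Decode}(x_{N(v)})$; if $1\le d_H(w_v,x_{N(v)})<t$, let $i$ be the smallest element of $N(v)$ where $w_v$ and $x_{N(v)}$ differ and increase $p_i$ by $\frac{t-d_H(w_v,x_{N(v)})}{ct}$; then flip every $x_i$ with $p_i=q$ and return the result. *)

From mathcomp Require Import all_boot all_order all_algebra.
Set Implicit Arguments.
Unset Strict Implicit.
Unset Printing Implicit Defensive.
Import Order.TTheory GRing.Theory Num.Theory.
Local Open Scope ring_scope.

Definition word k := 'rV['F_2]_k.

Definition dH k (u v : word k) : nat := #|[set j : 'I_k | u 0 j != v 0 j]|.

Definition Fdiff n (x y : word n) : {set 'I_n} := [set i | x 0 i != y 0 i].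

(* Bipartite graph with L = [n] (as 'I_n), R = 'I_m; each right vertex v
   carries a fixed ordering of its neighbourhood, nbr v : d.-tuple 'I_n. *)
Definition Nbh n m d (nbr : 'I_m -> d.-tuple 'I_n) (S : {set 'I_n}) : {set 'I_m} :=
  [set v | has (fun i => i \in S) (nbr v)].

Definition biregular n m c d (nbr : 'I_m -> d.-tuple 'I_n) : Prop :=
  (forall v, uniq (nbr v)) /\
  (forall i : 'I_n, #|[set v | i \in nbr v]| = c).

Definition bip_expander (R : realFieldType) n m c d (alpha delta : R)
    (nbr : 'I_m -> d.-tuple 'I_n) : Prop :=
  biregular c nbr /\ 0 < alpha <= 1 /\ 0 < delta <= 1 /\
  forall S : {set 'I_n}, (#|S|%:R <= alpha * n%:R) ->
     delta * c%:R * #|S|%:R <= #|Nbh nbr S|%:R.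

(* linear code over F_2 (a subgroup of (F_2^d,+), i.e. an F_2-subspace) *)
Definition linear_code d (C0 : {set word d}) : Prop :=
  0 \in C0 /\ forall u v, u \in C0 -> v \in C0 -> u + v \in C0.

Definition min_dist d (C0 : {set word d}) (d0 : nat) : Prop :=
  (exists u v, [/\ u \in C0, v \in C0, u != v & dH u v = d0]) /\
  (forall u v, u \in C0 -> v \in C0 -> u != v -> (d0 <= dH u v)%N).

Definition loc n m d (nbr : 'I_m -> d.-tuple 'I_n) (x : word n) (v : 'I_m)
  : word d := \row_(k < d) x 0 (tnth (nbr v) k).

Definition tanner n m d (nbr : 'I_m -> d.-tuple 'I_n) (C0 : {set word d})
  : {set word n} := [set x | [forall v, loc nbr x v \in C0]].

Definition lexlt d (u v : word d) : bool :=
  [exists k : 'I_d, [forall j : 'I_d, (j < k)%N ==> (u 0 j == v 0 j)]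
                    && (u 0 k == 0) && (v 0 k == 1)].

Definition Decode d (C0 : {set word d}) (z : word d) : word d :=
  odflt 0 [pick w in C0 | [forall w' in C0,
     (dH z w < dH z w')%N ||
     ((dH z w == dH z w') && ((w == w') || lexlt w w'))]].

(* the vector p computed by DeterFlip(x, q) (it does not depend on q);
   t is a real parameter. *)
Definition diffN n m d (nbr : 'I_m -> d.-tuple 'I_n) (C0 : {set word d})
  (x : word n) (v : 'I_m) : {set 'I_n} :=
  [set tnth (nbr v) k | k in [set k : 'I_d |
       Decode C0 (loc nbr x v) 0 k != loc nbr x v 0 k]].

Definition flipval (R : realFieldType) n m c d (nbr : 'I_m -> d.-tuple 'I_n)
  (C0 : {set word d}) (t : R) (x : word n) (i : 'I_n) : R :=
  \sum_(v : 'I_m | [&& (1 <= dH (Decode C0 (loc nbr x v)) (loc nbr x v))%N,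
                       (dH (Decode C0 (loc nbr x v)) (loc nbr x v))%:R < t,
                       i \in diffN nbr C0 x v &
                       [forall j in diffN nbr C0 x v, (i <= j)%N]])
     ((t - (dH (Decode C0 (loc nbr x v)) (loc nbr x v))%:R) / (c%:R * t)).

Definition Pset (R : realFieldType) n m c d (nbr : 'I_m -> d.-tuple 'I_n)
  (C0 : {set word d}) (t : R) (x : word n) (q : R) : {set 'I_n} :=
  [set i | flipval c nbr C0 t x i == q].

Definition inW (R : realFieldType) (c d0 : nat) (q : R) : Prop :=
  exists i : nat, (i <= c * d0)%N /\ q = i%:R / (c * d0)%:R.

(* Let sgn_F be +1 on F = F(x,y) and -1 off F, and X = sum_i sgn_F(i) p_i.
   A right vertex v with e = |N(v) :&: F| contributes at least
   ([e > 0] t - e) / (c t) to X. If v is silent, then e = 0 or e >= t, since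
   for 0 < 2e < d0 its decoder would recover y_{N(v)}, at distance e in [1, t)
   from x_{N(v)}, and v would vote. If v votes and its decoder recovers
   y_{N(v)}, it votes with weight (t - e) / (c t) for a coordinate of F.
   Otherwise it decodes to another codeword, at some distance k from x_{N(v)}
   with k + e >= d0, and the vote costs at most (t - k) / (c t) <= (e - t) / (c t).
   Summing over v and using |N(F)| >= delta c |F| gives
   X >= (delta - 1/t) |F| = c d0 B, with B the claimed bound. Each p_i is a
   level j / (c d0), so X = sum_j j / (c d0) * (|P_j :&: F| - |P_j :\: F|);
   as the c d0 nonzero levels are at most 1, one bracket is at least B. *)

From mathcomp Require Import all_boot all_order all_algebra.
From mathcomp Require Import ring lra zify.

Set Implicit Arguments.
Unset Strict Implicit.
Unset Printing Implicit Defensive.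

Import Order.TTheory GRing.Theory Num.Theory.
Local Open Scope ring_scope.

Lemma dHC k (u v : word k) : dH u v = dH v u.
Proof. by apply: eq_card => j; rewrite !inE eq_sym. Qed.

Lemma dH_triangle k (u v w : word k) : (dH u w <= dH u v + dH v w)%N.
Proof.
apply: leq_trans (leq_card_setU _ _); apply: subset_leq_card.
apply/subsetP => j; rewrite !inE.
by apply: contraLR; rewrite negb_or !negbK => /andP[/eqP-> /eqP->].
Qed.

Lemma min_dist_dHD k (C0 : {set word k}) d0 (z u w : word k) :
  min_dist C0 d0 -> u \in C0 -> w \in C0 -> u != w ->
  (d0 <= dH z u + dH z w)%N.
Proof.
move=> [_ md] uC wC neq; apply: leq_trans (md _ _ uC wC neq) _.
by rewrite (dHC z u) dH_triangle.
Qed.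

Lemma Decode_mem k (C0 : {set word k}) z : 0 \in C0 -> Decode C0 z \in C0.
Proof. by move=> C0_0; rewrite /Decode; case: pickP => [w /andP[] | _]. Qed.

Lemma Decode_close k (C0 : {set word k}) d0 z w :
  min_dist C0 d0 -> w \in C0 -> (2 * dH z w < d0)%N -> Decode C0 z = w.
Proof.
move=> C0_dist wC close.
have closer w' : w' \in C0 -> w' != w -> (dH z w < dH z w')%N.
  by move=> w'C neq; have := min_dist_dHD z C0_dist w'C wC neq; lia.
rewrite /Decode; case: pickP => [u /andP[uC /forall_inP /(_ w wC)] | none] /=.
  case: (eqVneq u w) => // neq; have farther := closer u uC neq.
  by case/orP => [|/andP[/eqP]]; lia.
move: (none w); rewrite wC /= => /negP[]; apply/forall_inP => w' w'C.
by case: (eqVneq w' w) => [->|neq]; rewrite ?eqxx ?orbT ?closer.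
Qed.

Lemma ltr_nat_half (R : realFieldType) (k d0 : nat) :
  ((k%:R : R) < d0%:R / 2) = (2 * k < d0)%N.
Proof. by rewrite ltr_pdivlMr ?ltr0n // -natrM ltr_nat mulnC. Qed.

Lemma dH_loc n m d (nbr : 'I_m -> d.-tuple 'I_n) (x y : word n) v :
  dH (loc nbr y v) (loc nbr x v) = count (mem (Fdiff x y)) (nbr v).
Proof.
rewrite /dH cardE /enum_mem size_filter -[in RHS](map_tnth_enum (nbr v)).
rewrite count_map count_filter; apply: eq_count => j.
by rewrite /= !inE !mxE eq_sym andbT.
Qed.

Lemma sum_count_nbr n m c d (nbr : 'I_m -> d.-tuple 'I_n) (S : {set 'I_n}) :
  biregular c nbr -> (\sum_v count (mem S) (nbr v) = c * #|S|)%N.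
Proof.
move=> [nbr_uniq deg_c].
have countE v : count (mem S) (nbr v) = (\sum_(i in S) (i \in nbr v))%N.
  rewrite -size_filter -(card_uniqP _) ?filter_uniq // -sum1_card big_mkcond.
  rewrite [RHS]big_mkcond; apply: eq_bigr => i _.
  by rewrite mem_filter /=; case: (i \in S) => //; case: ifP => /= ->.
under eq_bigr do rewrite countE.
rewrite exchange_big mulnC -sum_nat_const; apply: eq_bigr => i _.
by rewrite -(deg_c i) -sum1_card [RHS]big_mkcond; apply: eq_bigr => v _; rewrite inE.
Qed.

Definition is_min_of n (S : {set 'I_n}) (i : 'I_n) :=
  (i \in S) && [forall j in S, (i <= j)%N].

Lemma is_min_ofP n (S : {set 'I_n}) :
  S != set0 -> exists2 i0, i0 \in S & forall i, is_min_of S i = (i == i0).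
Proof.
case/set0Pn => i1 i1S; case: (arg_minnP val i1S) => i0 i0S i0_min.
exists i0 => // i; apply/idP/eqP => [/andP[iS /forall_inP i_min] | ->].
  by apply: val_inj; apply/eqP; rewrite eqn_leq i_min // i0_min.
by apply/andP; split=> //; apply/forall_inP.
Qed.

Definition sgn_in (T : finType) (R : pzRingType) (A : {set T}) (i : T) : R :=
  if i \in A then 1 else -1.

Lemma sum_sgn_in (T : finType) (R : pzRingType) (A P : {set T}) :
  \sum_(i in P) sgn_in R A i = #|P :&: A|%:R - #|P :\: A|%:R.
Proof.
apply/esym; rewrite -!sumr_const big_mkcond [X in _ - X]big_mkcond -sumrB.
rewrite [RHS]big_mkcond; apply: eq_bigr => i _; rewrite !inE /sgn_in.
by case: (i \in P); case: (i \in A); rewrite ?subr0 ?sub0r.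
Qed.

Lemma exists_level_set_sum_ge (R : realFieldType) (I : finType) (N : nat)
    (num : I -> nat) (p g : I -> R) (B : R) :
  (0 < N)%N -> 0 <= B ->
  (forall i, num i <= N)%N -> (forall i, p i = (num i)%:R / N%:R) ->
  N%:R * B <= \sum_i g i * p i ->
  exists2 j : nat, (0 < j <= N)%N & B <= \sum_(i | p i == j%:R / N%:R) g i.
Proof.
move=> N_gt0 B_ge0 num_le pE wsum_ge.
have N_neq0 : N%:R != 0 :> R by rewrite pnatr_eq0 -lt0n.
pose A (j : nat) := \sum_(i | p i == j%:R / N%:R) g i.
have levelE i (j : nat) : (p i == j%:R / N%:R) = (num i == j).
  by rewrite pE (inj_eq (mulIf _)) ?invr_eq0 // eqr_nat.
have regroup : \sum_i g i * p i = \sum_(j < N.+1) j%:R / N%:R * A j.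
  rewrite (partition_big (fun i => inord (num i) : 'I_N.+1) xpredT) //.
  apply: eq_bigr => j _; rewrite big_distrr; apply: eq_big => i.
    by rewrite levelE -val_eqE /= inordK ?ltnS.
  by rewrite -val_eqE /= inordK ?ltnS // => /eqP <-; rewrite pE mulrC.
case: (boolP [exists j : 'I_N, B <= A j.+1]) => [/existsP[j Bj] | ].
  by exists j.+1; rewrite ?ltn_ord.
rewrite negb_exists => /forallP A_lt_B.
suff : \sum_i g i * p i < N%:R * B by rewrite ltNge wsum_ge.
rewrite regroup big_ord_recl !mul0r add0r.
apply: (@lt_le_trans _ _ (\sum_(j < N) (bump 0 j)%:R / N%:R * B)).
  apply: ltr_sum => [|j _]; first by apply/hasP; exists (Ordinal N_gt0).
  by rewrite ltr_pM2l ?divr_gt0 ?ltr0n // ltNge A_lt_B.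
rewrite -mulr_suml; apply: ler_wpM2r => //.
apply: (@le_trans _ _ (\sum_(j < N) 1)); last by rewrite sumr_const card_ord.
by apply: ler_sum => j _; rewrite ler_pdivrMr ?ltr0n // mul1r ler_nat.
Qed.

Section DeterFlip.

Variables (R : realFieldType) (n m c d d0 : nat) (nbr : 'I_m -> d.-tuple 'I_n)
  (C0 : {set word d}) (x y : word n).
Hypotheses (c_gt0 : (0 < c)%N) (d0_gt0 : (0 < d0)%N)
  (C0_lin : linear_code C0) (C0_dist : min_dist C0 d0) (y_tanner : y \in tanner nbr C0).

Local Notation t := (d0%:R / 2 : R).
Local Notation F := (Fdiff x y).
Local Notation D v := (diffN nbr C0 x v).
Local Notation w v := (Decode C0 (loc nbr x v)).
Local Notation k v := (dH (w v) (loc nbr x v)).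
Local Notation e v := (count (mem F) (nbr v)).

Definition active v := (1 <= k v)%N && ((k v)%:R < t).
Definition votes_for v i := active v && is_min_of (D v) i.
Definition vote v : R := (t - (k v)%:R) / (c%:R * t).
Definition vote_lb v : R := ((if (0 < e v)%N then t else 0) - (e v)%:R) / (c%:R * t).
(* Voters have 2 k < d0, so this subtraction does not truncate. *)
Definition flipnum i : nat := \sum_(v | votes_for v i) (d0 - 2 * k v).

Let t_gt0 : 0 < t. Proof. by rewrite divr_gt0 ?ltr0n. Qed.
Let ct_gt0 : 0 < c%:R * t. Proof. by rewrite mulr_gt0 ?ltr0n. Qed.

Lemma flipvalE i : flipval c nbr C0 t x i = \sum_(v | votes_for v i) vote v.
Proof. by apply: eq_bigl => v; rewrite /votes_for /active /is_min_of !andbA. Qed.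

Lemma flipval_flipnum i : flipval c nbr C0 t x i = (flipnum i)%:R / (c * d0)%:R.
Proof.
rewrite flipvalE /flipnum natr_sum mulr_suml; apply: eq_bigr => v.
case/andP=> /andP[_]; rewrite ltr_nat_half => k_lt _.
rewrite /vote natrB ?natrM; last exact: ltnW.
by field; rewrite !pnatr_eq0 -!lt0n c_gt0 d0_gt0.
Qed.

Lemma flipnum_le : biregular c nbr -> forall i, (flipnum i <= c * d0)%N.
Proof.
move=> [_ deg_c] i; rewrite -(deg_c i) -sum_nat_const.
rewrite /flipnum big_mkcond [leqRHS]big_mkcond; apply: leq_sum => v _.
case: ifP => [/andP[_ /andP[/imsetP[j _ ->] _]] | _] //.
by rewrite inE mem_tnth leq_subr.
Qed.

Lemma sum_sgn_flipval :
  \sum_i sgn_in R F i * flipval c nbr C0 t x i =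
  \sum_v \sum_i (if votes_for v i then sgn_in R F i * vote v else 0).
Proof.
rewrite [RHS]exchange_big; apply: eq_bigr => i _.
rewrite flipvalE big_distrr big_mkcond; apply: eq_bigr => v _.
by case: ifP; rewrite ?mulr0.
Qed.

Lemma loc_tanner v : loc nbr y v \in C0.
Proof. by move: y_tanner; rewrite inE => /forallP. Qed.

Lemma Decode_loc_close v : (2 * e v < d0)%N -> w v = loc nbr y v.
Proof.
by move=> close; apply: Decode_close C0_dist (loc_tanner v) _; rewrite dHC dH_loc.
Qed.

Lemma diffN_neq0 v : (1 <= k v)%N -> D v != set0.
Proof.
rewrite card_gt0 => /set0Pn[j]; rewrite inE => wj.
by apply/set0Pn; exists (tnth (nbr v) j); apply/imsetP; exists j; rewrite ?inE.
Qed.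

Lemma diffN_sub_Fdiff v : w v = loc nbr y v -> D v \subset F.
Proof.
move=> wy; apply/subsetP => i /imsetP[j]; rewrite inE wy !mxE => yj ->.
by rewrite inE eq_sym.
Qed.

Lemma vote_ge0 v : active v -> 0 <= vote v.
Proof. by case/andP=> _ k_lt; rewrite divr_ge0 ?subr_ge0 ?ltW. Qed.

Lemma vote_lb_le0 v : ~~ active v -> vote_lb v <= 0.
Proof.
move=> inactive; rewrite /vote_lb; case: posnP => [->|e_gt0].
  by rewrite subrr mul0r.
have t_le_e : t <= (e v)%:R.
  rewrite leNgt ltr_nat_half; apply: contra inactive => close.
  by rewrite /active Decode_loc_close // dH_loc e_gt0 ltr_nat_half.
by rewrite mulr_le0_ge0 ?subr_le0 // invr_ge0 ltW.
Qed.

Lemma vote_lb_le_sgn_vote v i :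
  active v -> i \in D v -> vote_lb v <= sgn_in R F i * vote v.
Proof.
move=> act iD; have /andP[k_ge1 k_lt] := act.
case: (eqVneq (w v) (loc nbr y v)) => [wy | wy].
  have ke : k v = e v by rewrite wy dH_loc.
  by rewrite /sgn_in (subsetP (diffN_sub_Fdiff wy)) // mul1r /vote_lb /vote -ke k_ge1.
have far : (d0 <= k v + e v)%N.
  have := min_dist_dHD (loc nbr x v) C0_dist (Decode_mem _ C0_lin.1) (loc_tanner v) wy.
  by rewrite dHC [dH (loc nbr x v) _]dHC dH_loc.
apply: (@le_trans _ _ (- vote v)); last first.
  have := vote_ge0 act; rewrite /sgn_in; case: ifP => _; rewrite ?mul1r ?mulN1r; lra.
move: k_lt; rewrite ltr_nat_half => k_lt.
rewrite /vote_lb /vote -mulNr ifT; last by lia.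
apply: ler_wpM2r; first by rewrite invr_ge0 ltW.
have : (d0%:R : R) <= (k v)%:R + (e v)%:R by rewrite -natrD ler_nat.
lra.
Qed.

Lemma vote_lb_le_contrib v :
  vote_lb v <= \sum_i (if votes_for v i then sgn_in R F i * vote v else 0).
Proof.
case: (boolP (active v)) => [act | inactive]; last first.
  by rewrite big1 ?vote_lb_le0 // => i; rewrite /votes_for (negbTE inactive).
have [i0 i0D i0_min] := is_min_ofP (diffN_neq0 (proj1 (andP act))).
under eq_bigr => i _ do rewrite /votes_for act i0_min.
by rewrite -big_mkcond big_pred1_eq vote_lb_le_sgn_vote.
Qed.

Lemma sum_vote_lb : biregular c nbr ->
  \sum_v vote_lb v = (t * #|Nbh nbr F|%:R - (c * #|F|)%:R) / (c%:R * t).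
Proof.
move=> reg; rewrite -mulr_suml sumrB -(sum_count_nbr F reg) natr_sum.
rewrite -big_mkcond (eq_bigl (mem (Nbh nbr F))) ?sumr_const ?mulr_natr //.
by move=> v; rewrite /= inE has_count.
Qed.

Lemma sum_sgn_flipval_ge alpha delta :
  bip_expander c alpha delta nbr -> (dH x y)%:R <= alpha * n%:R ->
  (delta - t^-1) * #|F|%:R <= \sum_i sgn_in R F i * flipval c nbr C0 t x i.
Proof.
move=> [reg [_ [_ expand]]] small_F.
rewrite sum_sgn_flipval; apply: le_trans (ler_sum _ (fun v _ => vote_lb_le_contrib v)).
rewrite sum_vote_lb // ler_pdivlMr //.
have -> : (delta - t^-1) * #|F|%:R * (c%:R * t) = t * (delta * c%:R * #|F|%:R) - (c * #|F|)%:R.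
  by rewrite natrM; field; rewrite pnatr_eq0 -lt0n.
by rewrite lerD2r ler_pM2l ?expand.
Qed.

End DeterFlip.

Theorem lemma4p1 (R : realFieldType) (n m c d d0 : nat) (alpha delta : R)
    (nbr : 'I_m -> d.-tuple 'I_n) (C0 : {set word d}) (x y : word n) :
  (0 < c)%N ->
  bip_expander c alpha delta nbr ->
  linear_code C0 ->
  min_dist C0 d0 ->
  2 < d0%:R * delta ->
  y \in tanner nbr C0 ->
  (dH x y)%:R <= alpha * n%:R ->
  let eps0 : R := d0%:R / 2 - delta^-1 in
  let t : R := d0%:R / 2 in
  let F := Fdiff x y in
  exists q : R, [/\ inW c d0 q, q != 0 &
    #|Pset c nbr C0 t x q :&: F|%:R - #|Pset c nbr C0 t x q :\: F|%:R
      >= eps0 * delta / (2 * c%:R * t ^+ 2) * #|F|%:R].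
Proof.
move=> c_gt0 expander C0_lin C0_dist d0_delta y_tanner small_F eps0 t F.
have delta_gt0 : 0 < delta by case: expander => _ [_ [/andP[]]].
have d0_gt0 : (0 < d0)%N.
  by rewrite lt0n; apply: contraTneq d0_delta => ->; rewrite mul0r -leNgt ler0n.
have N_gt0 : (0 < c * d0)%N by rewrite muln_gt0 c_gt0.
set B := eps0 * delta / (2 * c%:R * t ^+ 2) * #|F|%:R.
have eps0_gt0 : 0 < eps0.
  rewrite -(pmulr_rgt0 _ delta_gt0) /eps0 mulrBr mulfV ?gt_eqF // mulrCA.
  by rewrite subr_gt0 mulrA ltr_pdivlMr ?ltr0n // mul1r.
have B_ge0 : 0 <= B.
  by rewrite /B !(mulr_ge0, divr_ge0, invr_ge0, exprn_ge0) ?ler0n ?ltW.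
have sum_ge : (c * d0)%:R * B <= \sum_i sgn_in R F i * flipval c nbr C0 t x i.
  have -> : (c * d0)%:R * B = (delta - t^-1) * #|F|%:R.
    by rewrite /B /eps0 /t natrM; field; rewrite ?pnatr_eq0 -?lt0n ?c_gt0 ?d0_gt0 ?gt_eqF.
  exact (sum_sgn_flipval_ge c_gt0 d0_gt0 C0_lin C0_dist y_tanner expander small_F).
have [j /andP[j_gt0 j_le] biased] := exists_level_set_sum_ge N_gt0 B_ge0
  (flipnum_le R d0 C0 x expander.1) (flipval_flipnum R nbr C0 x c_gt0 d0_gt0) sum_ge.
exists (j%:R / (c * d0)%:R); split.
- by exists j.
- by rewrite mulf_neq0 ?invr_eq0 // pnatr_eq0 -lt0n.
- rewrite -sum_sgn_in; under [leRHS]eq_bigl => i do rewrite inE; exact: biased.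
Qed.
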